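(* For any recipes $R$ and $R'$ there are recipes $R_1$ and $R_2$ such that $R[R_1/R_2]=R'$.
   Context: Fix disjoint finite sets $\mathcal C$ (comestible nodes) and $\mathcal A$ (action nodes). A type hierarchy is an acyclic directed graph with a unique maximal node; $t_1\preceq t_2$ means $t_1$ is a subtype of or equal to $t_2$, and $t_1\simeq t_2$ means $t_1\preceq t_2$ or $t_2\preceq t_1$. A recipe graph is $(C,A,E)$ with: (1) $\emptyset\subset C\subseteq\mathcal C$, $\emptyset\subset A\subseteq\mathcal A$; (2) $E\subseteq(C\times A)\cup(A\times C)$; (3) $(C\cup A,E)$ is a connected acyclic directed graph; (4) every action node has at least one incoming and one outgoing arc; (5) every comestible node has at most one incoming arc. A recipe is $(C,A,E,F)$ with $(C,A,E)$ a recipe graph and $F$ assigning a comestible type to each node of $C$ and an action type to each node of $A$ such that $F(n)\simeq F(n')$ for $n,n'\in C$ implies $n=n'$. For a recipe $R=(C,A,E,F)$ write $\mathsf{Coms}(R)=C$, $\mathsf{Acts}(R)=A$, $\mathsf{Nodes}(R)=C\cup A$, $\mathsf{Arcs}(R)=E$, $\mathsf{Type}(R)=F$; $\mathsf{In}(R)$ (resp. $\mathsf{Out}(R)$) are the comestible nodes with no incoming (resp. outgoing) arc. $R'=(C',A',E',F')$ is a subrecipe of $R$, $R'\sqsubseteq R$, iff $C'\subseteq C$, $A'\subseteq A$, $E'=E\cap((C'\times A')\cup(A'\times C'))$, and $F'=F$ on $C'\cup A'$. $R'$ is an untrimmed subrecipe of $R$, $R'\sqsubseteq^* R$, iff $R'\sqsubseteq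 R$ and for every $a\in\mathsf{Acts}(R')$, whenever $(c,a)$ or $(a,c)$ is in $\mathsf{Arcs}(R)$ then $c\in\mathsf{Nodes}(R')$. For $R'\sqsubseteq R$, $\mathsf{Front}(R,R')=(\mathsf{Out}(R')\setminus\mathsf{Out}(R))\cup(\mathsf{In}(R')\setminus\mathsf{In}(R))$. $R_1$ is parallel to $R_2$ w.r.t. $R$ iff for every $c\in\mathsf{Front}(R,R_1)$: for every $(c,a)\in\mathsf{Arcs}(R_1)$ there is some $(c,a')\in\mathsf{Arcs}(R_2)$, and for every $(a,c)\in\mathsf{Arcs}(R_1)$ there is some $(a',c)\in\mathsf{Arcs}(R_2)$. Structural substitution: let $F=\mathsf{Type}(R)$, $F_2=\mathsf{Type}(R_2)$. If (i) $\mathsf{Front}(R,R_1)\subseteq\mathsf{In}(R_2)\cup\mathsf{Out}(R_2)$; (ii) $R_1$ is parallel to $R_2$ w.r.t. $R$; (iii) $R_1\sqsubseteq^* R$; (iv) $(\mathsf{Nodes}(R)\setminus\mathsf{Nodes}(R_1))\cap\mathsf{Nodes}(R_2)=\emptyset$; (v) for all $n\in\mathsf{Nodes}(R)\setminus\mathsf{Nodes}(R_1)$ and $n'\in\mathsf{Nodes}(R_2)$, $F(n)\simeq F_2(n')$ implies $n=n'$, then $R[R_1/R_2]=(C',A',E',F')$ with $C'=(\mathsf{Coms}(R)\setminus\mathsf{Coms}(R_1))\cup\mathsf{Coms}(R_2)$, $A'=(\mathsf{Acts}(R)\setminus\mathsf{Acts}(R_1))\cup\mathsf{Acts}(R_2)$,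 $E'=(\mathsf{Arcs}(R)\setminus\mathsf{Arcs}(R_1))\cup\mathsf{Arcs}(R_2)$, and $F'(n)=F_2(n)$ if $n\in\mathsf{Nodes}(R_2)$, $F'(n)=F(n)$ otherwise; if any condition fails, $R[R_1/R_2]=\bot$. *)

From Stdlib Require Import ClassicalEpsilon.
From mathcomp Require Import all_boot.
Set Implicit Arguments. Unset Strict Implicit. Unset Printing Implicit Defensive.

(* A type hierarchy on a finite set T of types: sub t1 t2 is an arc meaning
   t1 is a direct subtype of t2; acyclic, with a unique maximal node. *)
Definition maximal_node (T : finType) (sub : rel T) (m : T) : Prop :=
  forall t, ~~ sub m t.

Definition is_type_hierarchy (T : finType) (sub : rel T) : Prop :=
  (forall x y, sub x y -> ~~ connect sub y x) /\
  (exists m, maximal_node sub m /\ forall m', maximal_node sub m' -> m' = m).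

Definition subtype_of (T : finType) (sub : rel T) (t1 t2 : T) : bool :=
  connect sub t1 t2.
Definition comparable_ty (T : finType) (sub : rel T) (t1 t2 : T) : bool :=
  subtype_of sub t1 t2 || subtype_of sub t2 t1.

Section Recipes.
(* Cn = the comestible node universe, An = the action node universe;
   disjointness is built in by taking nodes in the sum type. *)
Variables (Cn An : finType).
Variables (TC TA : finType) (subC : rel TC) (subA : rel TA).

Definition node := (Cn + An)%type.

(* Raw data (C, A, E, F); F is a partial typing function whose domain is
   required (in is_recipe) to be exactly C (resp. A). *)
Record raw := Raw {
  rC : {set Cn};
  rA : {set An};
  rE : {set node * node};
  rFC : {ffun Cn -> option TC};
  rFA : {ffun An -> option TA}
}.

Definition Coms (R : raw) := rC R.
Definition Acts (R : raw) := rA R.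
Definition Arcs (R : raw) := rE R.
Definition Nodes (R : raw) : {set node} :=
  (inl @: rC R) :|: (inr @: rA R).

Definition arc (R : raw) : rel node := fun x y => (x, y) \in rE R.
Definition uarc (R : raw) : rel node := fun x y => arc R x y || arc R y x.

Definition bip (C : {set Cn}) (A : {set An}) : {set node * node} :=
  [set e | match e with
           | (inl c, inr a) => (c \in C) && (a \in A)
           | (inr a, inl c) => (c \in C) && (a \in A)
           | _ => false end].

Definition is_recipe_graph (R : raw) : Prop :=
  [/\ (rC R != set0) && (rA R != set0),
      rE R \subset bip (rC R) (rA R),
      ((forall x y, x \in Nodes R -> y \in Nodes R -> connect (uarc R) x y)
       /\
       (forall x y, arc R x y -> ~~ connect (arc R) y x)),
      (forall a, a \in rA R ->
         (exists c, arc R (inl c) (inr a)) /\ (exists c, arc R (inr a) (inl c)))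
    & (forall c, c \in rC R -> #|[set x | arc R x (inl c)]| <= 1)].

Definition sim_opt (T : finType) (sub : rel T) (o o' : option T) : bool :=
  match o, o' with Some t, Some t' => comparable_ty sub t t' | _, _ => false end.

Definition is_recipe (R : raw) : Prop :=
  [/\ is_recipe_graph R,
      (forall c, (rFC R c != None) = (c \in rC R)),
      (forall a, (rFA R a != None) = (a \in rA R))
    & (forall c c', c \in rC R -> c' \in rC R ->
         sim_opt subC (rFC R c) (rFC R c') -> c = c')].

Definition In_ (R : raw) : {set Cn} :=
  [set c in rC R | ~~ [exists x, arc R x (inl c)]].
Definition Out_ (R : raw) : {set Cn} :=
  [set c in rC R | ~~ [exists x, arc R (inl c) x]].

Definition subrecipe (R' R : raw) : Prop :=
  [/\ rC R' \subset rC R, rA R' \subset rA R,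
      rE R' = rE R :&: bip (rC R') (rA R'),
      (forall c, c \in rC R' -> rFC R' c = rFC R c)
    & (forall a, a \in rA R' -> rFA R' a = rFA R a)].

Definition untrimmed_subrecipe (R' R : raw) : Prop :=
  subrecipe R' R /\
  forall a c, a \in rA R' ->
    (arc R (inl c) (inr a) || arc R (inr a) (inl c)) -> inl c \in Nodes R'.

Definition Front (R R' : raw) : {set Cn} :=
  (Out_ R' :\: Out_ R) :|: (In_ R' :\: In_ R).

Definition parallel (R1 R2 R : raw) : Prop :=
  forall c, c \in Front R R1 ->
    (forall a, arc R1 (inl c) a -> exists a', arc R2 (inl c) a') /\
    (forall a, arc R1 a (inl c) -> exists a', arc R2 a' (inl c)).

(* typing of an arbitrary node; comestible and action types live in
   different hierarchies, hence are never comparable *)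
Definition sim_node (R R2 : raw) (n n' : node) : bool :=
  match n, n' with
  | inl c, inl c' => sim_opt subC (rFC R c) (rFC R2 c')
  | inr a, inr a' => sim_opt subA (rFA R a) (rFA R2 a')
  | _, _ => false
  end.

Definition subst_conditions (R R1 R2 : raw) : Prop :=
  [/\ Front R R1 \subset In_ R2 :|: Out_ R2,
      parallel R1 R2 R,
      untrimmed_subrecipe R1 R,
      (Nodes R :\: Nodes R1) :&: Nodes R2 = set0
    & (forall n n', n \in Nodes R :\: Nodes R1 -> n' \in Nodes R2 ->
         sim_node R R2 n n' -> n = n')].

Definition subst_result (R R1 R2 : raw) : raw :=
  let C' := (rC R :\: rC R1) :|: rC R2 in
  let A' := (rA R :\: rA R1) :|: rA R2 in
  Raw C' A' ((rE R :\: rE R1) :|: rE R2)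
      [ffun c => if c \in rC R2 then rFC R2 c
                 else if c \in C' then rFC R c else None]
      [ffun a => if a \in rA R2 then rFA R2 a
                 else if a \in A' then rFA R a else None].

(* R[R1/R2]; None stands for ⊥ *)
Definition subst (R R1 R2 : raw) : option raw :=
  if excluded_middle_informative (subst_conditions R R1 R2) then Some (subst_result R R1 R2) else None.

End Recipes.

From mathcomp Require Import all_boot.
Set Implicit Arguments. Unset Strict Implicit. Unset Printing Implicit Defensive.

(* Substitute the whole recipe: R[R/R'] = R'.  With R1 = R the frontier is
   empty and no node of R survives, so every side condition of the
   substitution is vacuous except R being an untrimmed subrecipe of itself,
   which holds because arcs only join nodes of R.  The result has the nodes,
   arcs and types of R', since the typing of R' is undefined off its nodes. *)

Section WholeSubstitution.

Variables (Cn An TC TA : finType) (subC : rel TC) (subA : rel TA).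
Implicit Types R : raw Cn An TC TA.

Lemma Front_self R : Front R R = set0.
Proof. by rewrite /Front !setDv setU0. Qed.

Lemma arc_inl_Nodes R a c :
  rE R \subset bip (rC R) (rA R) ->
  arc R (inl c) (inr a) || arc R (inr a) (inl c) -> inl c \in Nodes R.
Proof.
move=> /subsetP Ebip /orP[] /Ebip; rewrite inE => /andP[cC _];
  by rewrite inE; apply/orP; left; apply: imset_f.
Qed.

Lemma untrimmed_subrecipe_refl R :
  rE R \subset bip (rC R) (rA R) -> untrimmed_subrecipe R R.
Proof.
move=> Ebip; split; last by move=> a c _; apply: arc_inl_Nodes.
by split=> //; apply/esym/setIidPl.
Qed.

Lemma subst_conditions_whole R R2 :
  rE R \subset bip (rC R) (rA R) -> subst_conditions subC subA R R R2.
Proof.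
move=> Ebip; split.
- by rewrite Front_self sub0set.
- by move=> c; rewrite Front_self inE.
- exact: untrimmed_subrecipe_refl.
- by rewrite setDv set0I.
- by move=> n n'; rewrite setDv inE.
Qed.

Lemma subst_resultE_whole R R2 :
  (forall c, (rFC R2 c != None) = (c \in rC R2)) ->
  (forall a, (rFA R2 a != None) = (a \in rA R2)) ->
  subst_result R R R2 = R2.
Proof.
case: R2 => C A E FC FA /= FCdom FAdom.
rewrite /subst_result /= !setDv !set0U; congr Raw; apply/ffunP=> x;
  rewrite ffunE; case: ifP => // xdom; rewrite xdom.
- by move: (FCdom x); rewrite xdom => /negbFE/eqP.
- by move: (FAdom x); rewrite xdom => /negbFE/eqP.
Qed.

Lemma substE R R1 R2 :
  subst_conditions subC subA R R1 R2 ->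
  subst subC subA R R1 R2 = Some (subst_result R R1 R2).
Proof.
by move=> cond; rewrite /subst; case: ClassicalEpsilon.excluded_middle_informative.
Qed.

End WholeSubstitution.

Theorem mainTheorem9 (Cn An TC TA : finType) (subC : rel TC) (subA : rel TA)
    (hC : is_type_hierarchy subC) (hA : is_type_hierarchy subA)
    (R R' : raw Cn An TC TA)
    (hR : is_recipe subC R) (hR' : is_recipe subC R') :
  exists R1 R2 : raw Cn An TC TA,
    is_recipe subC R1 /\ is_recipe subC R2 /\
    subst subC subA R R1 R2 = Some R'.
Proof.
have [[_ Ebip _ _ _] _ _ _] := hR.
have [_ FCdom FAdom _] := hR'.
exists R, R'; do 2!split => //.
rewrite substE; last exact: subst_conditions_whole.
by rewrite (subst_resultE_whole R FCdom FAdom).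
Qed.
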